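(* Let $\alpha$ be a nonzero real number. Every closed $\alpha$-stationary curve in $\mathbb H^2$ (not passing through $N$) is a circle centered at $N$.
   Context: Let $\langle x,y\rangle_\epsilon=x_1y_1+x_2y_2-x_3y_3$ be the Lorentzian inner product on $\mathbb R^3$ and $|x|_\epsilon=\sqrt{|\langle x,x\rangle_\epsilon|}$. The hyperbolic plane is $\mathbb H^2=\{(x,y,z):x^2+y^2-z^2=-1,\ z>0\}$ with the induced metric. It is parametrized by $\Psi(u,v)=(\sinh u\cos v,\sinh u\sin v,\cosh u)$, and $N=(0,0,1)$. The hyperbolic distance from $\Psi(u,v)$ to $N$ is $u$. For a regular curve $\gamma(t)=\Psi(u(t),v(t))$ with $u>0$, the energy is $$E_\alpha[\gamma]=\int_\gamma\mathsf d^\alpha\,ds=\int u^\alpha\sqrt{u'^2+\sinh^2(u)v'^2}\,dt,$$ where $\mathsf d$ is the hyperbolic distance to $N$. The curve is $\alpha$-stationary if it is a critical point of $E_\alpha$ (i.e. $(u,v)$ satisfies the Euler–Lagrange equations). Equivalently, its geodesic curvature satisfies $\kappa=\alpha\langle\mathbf n,\xi\rangle_\epsilon/\mathsf d$. Here $\mathbf n$ is the unit normal and $\xi=\Psi_u$ is the unit tangent of the geodesic ray from $N$ through the point. Throughout the paper, $\alpha\ne0$ and curves avoid $N$. *)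

From Stdlib Require Import Reals.
From Coquelicot Require Import Coquelicot.
Open Scope R_scope.

(* Parametrization of the hyperboloid model of H^2:
   Psi(u,v) = (sinh u cos v, sinh u sin v, cosh u). *)
Definition Psi (u v : R) : R * R * R :=
  (sinh u * cos v, sinh u * sin v, cosh u).

(* The hyperbolic distance from Psi(u,v) to N = (0,0,1) is u (for u >= 0). *)

Definition smooth (f : R -> R) : Prop := forall n t, ex_derive_n f n t.

Definition speed (u v : R -> R) (t : R) : R :=
  sqrt ((Derive u t) ^ 2 + (sinh (u t)) ^ 2 * (Derive v t) ^ 2).

(* Regular curve avoiding N: u > 0 and the velocity never vanishes. *)
Definition regular_curve (u v : R -> R) : Prop :=
  smooth u /\ smooth v /\
  (forall t, 0 < u t) /\
  (forall t, 0 < (Derive u t) ^ 2 + (sinh (u t)) ^ 2 * (Derive v t) ^ 2).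

Definition closed_curve (u v : R -> R) : Prop :=
  exists T, 0 < T /\ forall t, Psi (u (t + T)) (v (t + T)) = Psi (u t) (v t).

(* alpha-stationary: Euler-Lagrange equations of
   L(u,v,u',v') = u^alpha * sqrt(u'^2 + sinh^2(u) v'^2). *)
Definition alpha_stationary (alpha : R) (u v : R -> R) : Prop :=
  (forall t,
     is_derive (fun s => Rpower (u s) alpha * Derive u s / speed u v s) t
       (alpha * Rpower (u t) (alpha - 1) * speed u v t
        + Rpower (u t) alpha * sinh (u t) * cosh (u t) * (Derive v t) ^ 2
          / speed u v t)) /\
  (forall t,
     is_derive
       (fun s => Rpower (u s) alpha * (sinh (u s)) ^ 2 * Derive v s / speed u v s)
       t 0).

(** Closedness forces [cosh u], hence the distance [u] to N, to be periodic, so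
    [u] attains a maximum and a minimum.  At a critical point of [u] the first
    Euler–Lagrange equation reads [d/dt (u^α u'/W) = p (α sinh u + u cosh u)]
    with [p > 0]; were the right-hand side positive at the maximum, [u'] would
    become positive just after it.  Hence [α + u coth u <= 0] at the maximum of
    [u] and, symmetrically, [α + u coth u >= 0] at its minimum.  Since [x coth x]
    is strictly increasing on [(0, ∞)], the two extreme values coincide. *)

From Stdlib Require Import Reals ZArith Lra Lia Zfloor.
From Coquelicot Require Import Coquelicot.
Open Scope R_scope.

Lemma derivable_pt_of_is_derive f x l : is_derive f x l -> derivable_pt f x.
Proof. intros Hd. exists l. now apply is_derive_Reals. Qed.

Lemma strict_increasing_of_is_derive (f df : R -> R) a b :
  a < b ->
  (forall x, a <= x <= b -> is_derive f x (df x)) ->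
  (forall x, a < x < b -> 0 < df x) ->
  f a < f b.
Proof.
  intros Hab Hd Hpos.
  destruct (MVT_cor2 f df a b Hab) as [c [Hmvt Hc]].
  - intros c Hc. now apply is_derive_Reals, Hd.
  - pose proof (Hpos c Hc). nra.
Qed.

Lemma is_derive_global_max f t l : is_derive f t l -> (forall s, f s <= f t) -> l = 0.
Proof.
  intros Hd Hmax. apply is_derive_Reals in Hd.
  exact (deriv_maximum f (t - 1) (t + 1) t (exist _ l Hd)
           ltac:(lra) ltac:(lra) (fun x _ _ => Hmax x)).
Qed.

Lemma is_derive_global_min f t l : is_derive f t l -> (forall s, f t <= f s) -> l = 0.
Proof.
  intros Hd Hmin. apply is_derive_Reals in Hd.
  exact (deriv_minimum f (t - 1) (t + 1) t (exist _ l Hd)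
           ltac:(lra) ltac:(lra) (fun x _ _ => Hmin x)).
Qed.

Lemma is_derive_pos_gt_right g t L :
  is_derive g t L -> 0 < L ->
  exists d, 0 < d /\ forall s, t < s < t + d -> g t < g s.
Proof.
  intros Hd HL. apply is_derive_Reals in Hd.
  destruct (Hd L HL) as [d Hdelta].
  exists d. split; [apply cond_pos |]. intros s Hs.
  assert (Hh : 0 < s - t) by lra.
  specialize (Hdelta (s - t) ltac:(lra) ltac:(rewrite Rabs_pos_eq; lra)).
  replace (t + (s - t)) with s in Hdelta by ring.
  apply Rabs_def2 in Hdelta.
  assert (Hq : 0 < (g s - g t) / (s - t)) by lra.
  apply (Rmult_lt_compat_r (s - t)) in Hq; [| exact Hh].
  field_simplify in Hq; lra.
Qed.

Lemma exists_gt_of_weighted_derive_pos (f df c : R -> R) t L :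
  (forall s, is_derive f s (df s)) -> (forall s, 0 < c s) -> df t = 0 ->
  is_derive (fun s => c s * df s) t L -> 0 < L ->
  exists s, f t < f s.
Proof.
  intros Hf Hc Ht HL Lpos.
  destruct (is_derive_pos_gt_right _ _ _ HL Lpos) as [d [Hd Hgt]].
  exists (t + d / 2). apply (strict_increasing_of_is_derive f df); [lra | auto |].
  intros s Hs. specialize (Hgt s ltac:(lra)). rewrite Ht, Rmult_0_r in Hgt.
  pose proof (Hc s). nra.
Qed.

Lemma exists_lt_of_weighted_derive_neg (f df c : R -> R) t L :
  (forall s, is_derive f s (df s)) -> (forall s, 0 < c s) -> df t = 0 ->
  is_derive (fun s => c s * df s) t L -> L < 0 ->
  exists s, f s < f t.
Proof.
  intros Hf Hc Ht HL Lneg.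
  destruct (exists_gt_of_weighted_derive_pos (fun s => - f s) (fun s => - df s) c t (- L))
    as [s Hs]; [| exact Hc | lra | | lra |].
  - intro s. exact (is_derive_opp _ _ _ (Hf s)).
  - apply (is_derive_ext (fun s => - (c s * df s))); [intro s; apply Ropp_mult_distr_r |].
    exact (is_derive_opp _ _ _ HL).
  - exists s. lra.
Qed.

Lemma periodic_Z (f : R -> R) T : (forall t, f (t + T) = f t) ->
  forall k t, f (t + IZR k * T) = f t.
Proof.
  intros Hper.
  assert (Hnat : forall n t, f (t + INR n * T) = f t).
  { induction n as [| n IH]; intro t.
    - simpl. now rewrite Rmult_0_l, Rplus_0_r.
    - rewrite S_INR. replace (t + (INR n + 1) * T) with (t + INR n * T + T) by ring.
      rewrite Hper. apply IH. }
  intros k t. destruct (Z.le_gt_cases 0 k) as [Hk | Hk].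
  - rewrite <- (Z2Nat.id k Hk), <- INR_IZR_INZ. apply Hnat.
  - replace k with (- Z.of_nat (Z.to_nat (- k)))%Z by lia.
    rewrite opp_IZR, <- INR_IZR_INZ.
    rewrite <- (Hnat (Z.to_nat (- k)) (t + - INR (Z.to_nat (- k)) * T)).
    f_equal. ring.
Qed.

Lemma periodic_continuous_attains_max (f : R -> R) T :
  0 < T -> (forall t, f (t + T) = f t) -> (forall t, continuity_pt f t) ->
  exists t1, forall t, f t <= f t1.
Proof.
  intros HT Hper Hc.
  destruct (continuity_ab_maj f 0 T) as [t1 [Hmax _]]; [lra | auto |].
  exists t1. intro t.
  set (k := Zfloor (t / T)).
  assert (Hk : IZR k * T <= t < IZR k * T + T).
  { destruct (Zfloor_bound (t / T)) as [Hl Hr]. fold k in Hl, Hr.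
    apply (Rmult_le_compat_r T) in Hl; [| lra].
    apply (Rmult_lt_compat_r T) in Hr; [| lra].
    replace (t / T * T) with t in * by (field; lra). lra. }
  replace (f t) with (f (t - IZR k * T)); [apply Hmax; lra |].
  rewrite <- (periodic_Z f T Hper k). f_equal. ring.
Qed.

Lemma periodic_continuous_attains_min (f : R -> R) T :
  0 < T -> (forall t, f (t + T) = f t) -> (forall t, continuity_pt f t) ->
  exists t0, forall t, f t0 <= f t.
Proof.
  intros HT Hper Hc.
  destruct (periodic_continuous_attains_max (fun t => - f t) T HT) as [t0 Ht0].
  - intro t. now rewrite Hper.
  - intro t. now apply (continuity_pt_opp f).
  - exists t0. intro t. specialize (Ht0 t). lra.
Qed.

Lemma Rpower_pos x a : 0 < Rpower x a.
Proof. apply exp_pos. Qed.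

Lemma Rpower_pred x a : 0 < x -> Rpower x a = x * Rpower x (a - 1).
Proof.
  intros Hx. rewrite <- (Rpower_1 x Hx) at 2.
  rewrite <- Rpower_plus. f_equal. ring.
Qed.

Lemma is_derive_sinh x : is_derive sinh x (cosh x).
Proof. apply is_derive_Reals, derivable_pt_lim_sinh. Qed.

Lemma is_derive_cosh x : is_derive cosh x (sinh x).
Proof. apply is_derive_Reals, derivable_pt_lim_cosh. Qed.

Lemma cosh_sqr_sub_sinh_sqr x : cosh x * cosh x - sinh x * sinh x = 1.
Proof. unfold cosh, sinh. rewrite exp_Ropp. field. apply Rgt_not_eq, exp_pos. Qed.

Lemma sinh_pos x : 0 < x -> 0 < sinh x.
Proof. intros Hx. rewrite <- sinh_0. now apply sinh_lt. Qed.

Lemma cosh_lt x y : 0 <= x -> x < y -> cosh x < cosh y.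
Proof.
  intros Hx Hxy. apply (strict_increasing_of_is_derive cosh sinh x y Hxy).
  - intros z _. apply is_derive_cosh.
  - intros z Hz. apply sinh_pos. lra.
Qed.

Lemma cosh_inj x y : 0 < x -> 0 < y -> cosh x = cosh y -> x = y.
Proof.
  intros Hx Hy E. destruct (Rtotal_order x y) as [H | [H | H]]; auto.
  - pose proof (cosh_lt x y ltac:(lra) H). lra.
  - pose proof (cosh_lt y x ltac:(lra) H). lra.
Qed.

Lemma lt_sinh_mul_cosh x : 0 < x -> x < sinh x * cosh x.
Proof.
  intros Hx.
  enough (sinh 0 * cosh 0 - 0 < sinh x * cosh x - x) by (rewrite sinh_0 in *; lra).
  apply (strict_increasing_of_is_derive (fun z => sinh z * cosh z - z)
           (fun z => cosh z * cosh z + sinh z * sinh z - 1) 0 x Hx).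
  - intros z _.
    apply (is_derive_minus (fun z => sinh z * cosh z) (fun z => z));
      [| apply (is_derive_id (K := R_AbsRing))].
    apply (is_derive_mult sinh cosh);
      [apply is_derive_sinh | apply is_derive_cosh | apply Rmult_comm].
  - intros z Hz. pose proof (cosh_sqr_sub_sinh_sqr z). pose proof (sinh_pos z ltac:(lra)). nra.
Qed.

Lemma x_cosh_div_sinh_lt x y : 0 < x -> x < y -> x * cosh x / sinh x < y * cosh y / sinh y.
Proof.
  intros Hx Hxy.
  apply (strict_increasing_of_is_derive (fun z => z * cosh z / sinh z)
           (fun z => ((1 * cosh z + z * sinh z) * sinh z - z * cosh z * cosh z) / sinh z ^ 2)
           x y Hxy).
  - intros z Hz. pose proof (sinh_pos z ltac:(lra)).
    apply (is_derive_div (fun z => z * cosh z) sinh); [| apply is_derive_sinh | lra].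
    apply (is_derive_mult (fun z => z) cosh);
      [apply (is_derive_id (K := R_AbsRing)) | apply is_derive_cosh | apply Rmult_comm].
  - intros z Hz. pose proof (sinh_pos z ltac:(lra)).
    replace ((1 * cosh z + z * sinh z) * sinh z - z * cosh z * cosh z)
      with (sinh z * cosh z - z * (cosh z * cosh z - sinh z * sinh z)) by ring.
    rewrite cosh_sqr_sub_sinh_sqr, Rmult_1_r.
    apply Rdiv_lt_0_compat; [pose proof (lt_sinh_mul_cosh z ltac:(lra)); lra | nra].
Qed.

(** [radial_factor alpha x = (alpha + x coth x) sinh x]. *)
Definition radial_factor (alpha x : R) : R := alpha * sinh x + x * cosh x.

Lemma radial_factor_sign_change alpha m M :
  0 < m -> m <= M -> radial_factor alpha M <= 0 -> 0 <= radial_factor alpha m -> m = M.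
Proof.
  intros Hm HmM HM0 H0m. destruct (Req_dec m M) as [| Hne]; [assumption | exfalso].
  pose proof (x_cosh_div_sinh_lt m M Hm ltac:(lra)) as Hlt.
  pose proof (sinh_pos m Hm). pose proof (sinh_pos M ltac:(lra)).
  assert (Hdiv : forall x, 0 < sinh x ->
            radial_factor alpha x / sinh x = alpha + x * cosh x / sinh x)
    by (intros x Hx; unfold radial_factor; field; lra).
  assert (radial_factor alpha M / sinh M <= 0).
  { unfold Rdiv. pose proof (Rinv_0_lt_compat (sinh M) ltac:(lra)). nra. }
  assert (0 <= radial_factor alpha m / sinh m) by (apply Rdiv_le_0_compat; lra).
  rewrite Hdiv in *; lra.
Qed.

Lemma closed_curve_periodic_u u v :
  (forall t, 0 < u t) -> closed_curve u v -> exists T, 0 < T /\ forall t, u (t + T) = u t.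
Proof.
  intros Hpos [T [HT Hper]]. exists T. split; [exact HT |]. intro t.
  apply cosh_inj; [apply Hpos | apply Hpos |].
  exact (f_equal snd (Hper t)).
Qed.

Section StationaryCurve.

Variables (alpha : R) (u v : R -> R).
Hypothesis regular : regular_curve u v.
Hypothesis stationary : alpha_stationary alpha u v.

Lemma u_pos t : 0 < u t.
Proof. apply regular. Qed.

Lemma speed_pos t : 0 < speed u v t.
Proof. apply sqrt_lt_R0, regular. Qed.

Lemma is_derive_u t : is_derive u t (Derive u t).
Proof. apply Derive_correct. exact (proj1 regular 1%nat t). Qed.

Lemma continuity_pt_u t : continuity_pt u t.
Proof.
  exact (derivable_continuous_pt _ _ (derivable_pt_of_is_derive _ _ _ (is_derive_u t))).
Qed.

Let weight s := Rpower (u s) alpha / speed u v s.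

Lemma weight_pos s : 0 < weight s.
Proof. apply Rdiv_lt_0_compat; [apply Rpower_pos | apply speed_pos]. Qed.

Lemma el_derive_at_critical t : Derive u t = 0 ->
  exists p, 0 < p /\
    is_derive (fun s => weight s * Derive u s) t (p * radial_factor alpha (u t)).
Proof.
  intros Hcrit. pose proof (speed_pos t) as HW. pose proof (sinh_pos _ (u_pos t)).
  assert (HW2 : speed u v t ^ 2 = sinh (u t) ^ 2 * Derive v t ^ 2).
  { unfold speed. rewrite pow2_sqrt; [rewrite Hcrit; ring |].
    pose proof (proj2 (proj2 (proj2 regular)) t). lra. }
  assert (Hv : 0 < Derive v t ^ 2).
  { pose proof (pow2_ge_0 (Derive v t)). pose proof (pow_lt _ 2 HW). nra. }
  set (p := Rpower (u t) (alpha - 1) * Derive v t ^ 2 * sinh (u t) / speed u v t).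
  assert (Hrhs : alpha * Rpower (u t) (alpha - 1) * speed u v t
                 + Rpower (u t) alpha * sinh (u t) * cosh (u t) * Derive v t ^ 2 / speed u v t
                 = p * radial_factor alpha (u t)).
  { rewrite (Rpower_pred (u t) alpha (u_pos t)).
    replace (alpha * Rpower (u t) (alpha - 1) * speed u v t) with
      (alpha * Rpower (u t) (alpha - 1) * speed u v t ^ 2 / speed u v t) by (field; lra).
    rewrite HW2. unfold p, radial_factor. field. lra. }
  exists p. split.
  - apply Rdiv_lt_0_compat; [| exact HW].
    pose proof (Rpower_pos (u t) (alpha - 1)). apply Rmult_lt_0_compat; [nra | assumption].
  - rewrite <- Hrhs.
    apply (is_derive_ext (fun s => Rpower (u s) alpha * Derive u s / speed u v s));
      [| apply stationary].
    intro s. change (Rpower (u s) alpha * Derive u s / speed u v s = weight s * Derive u s).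
    unfold weight, Rdiv. ring.
Qed.

Lemma radial_factor_at_max t : (forall s, u s <= u t) -> radial_factor alpha (u t) <= 0.
Proof.
  intros Hmax.
  pose proof (is_derive_global_max u t _ (is_derive_u t) Hmax) as Hcrit.
  destruct (el_derive_at_critical t Hcrit) as [p [Hp HL]].
  apply Rnot_lt_le. intro Hpos.
  destruct (exists_gt_of_weighted_derive_pos u (Derive u) weight t _
              is_derive_u weight_pos Hcrit HL) as [s Hs]; [nra |].
  specialize (Hmax s). lra.
Qed.

Lemma radial_factor_at_min t : (forall s, u t <= u s) -> 0 <= radial_factor alpha (u t).
Proof.
  intros Hmin.
  pose proof (is_derive_global_min u t _ (is_derive_u t) Hmin) as Hcrit.
  destruct (el_derive_at_critical t Hcrit) as [p [Hp HL]].
  apply Rnot_lt_le. intro Hneg.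
  destruct (exists_lt_of_weighted_derive_neg u (Derive u) weight t _
              is_derive_u weight_pos Hcrit HL) as [s Hs]; [nra |].
  specialize (Hmin s). lra.
Qed.

End StationaryCurve.

Theorem theorem2p7 (alpha : R) (u v : R -> R) :
  alpha <> 0 ->
  regular_curve u v ->
  closed_curve u v ->
  alpha_stationary alpha u v ->
  exists r, 0 < r /\ forall t, u t = r.
Proof.
  intros _ Hreg Hclosed Hstat.
  destruct (closed_curve_periodic_u u v (u_pos u v Hreg) Hclosed) as [T [HT Hper]].
  destruct (periodic_continuous_attains_max u T HT Hper (continuity_pt_u u v Hreg))
    as [t1 Hmax].
  destruct (periodic_continuous_attains_min u T HT Hper (continuity_pt_u u v Hreg))
    as [t0 Hmin].
  assert (Heq : u t0 = u t1).
  { apply (radial_factor_sign_change alpha).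
    - apply (u_pos u v Hreg).
    - apply Hmin.
    - exact (radial_factor_at_max alpha u v Hreg Hstat t1 Hmax).
    - exact (radial_factor_at_min alpha u v Hreg Hstat t0 Hmin). }
  exists (u t1). split; [apply (u_pos u v Hreg) |].
  intro t. specialize (Hmin t). specialize (Hmax t). lra.
Qed.
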